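(* Let $G = K(n_1,n_2,\ldots,n_p)$ be a complete multipartite graph, where $p \ge 2$ and $0\le n_1\le n_2\le\cdots\le n_p$, and let $N=n_1+n_2+\cdots+n_p$. Then: (a) if $2n_p \le N$, the detour sequence of $G$ is $(N)_N$; (b) if $2n_p > N$, the detour sequence of $G$ is $(2(N-n_p))_{N-n_p},\ (2(N-n_p)+1)_{n_p}$.
   Context: All graphs are finite and simple. $K(n_1,\ldots,n_p)$ denotes the complete multipartite graph whose vertex set is partitioned into independent sets $V_1,\ldots,V_p$ with $|V_i|=n_i$, two vertices being adjacent if and only if they lie in different parts. The order of a path is its number of vertices. For a vertex $v$, $\tau(v)$ is the order of a longest path having $v$ as an endvertex; the detour sequence is the nondecreasing sequence of the values $\tau(v)$ over all vertices. The notation $(n)_k$ denotes the integer $n$ repeated $k$ times consecutively. *)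

From mathcomp Require Import all_boot.
Set Implicit Arguments. Unset Strict Implicit. Unset Printing Implicit Defensive.

(* A simple graph is given by a symmetric irreflexive relation e on a finType T. *)

Definition is_gpath (T : finType) (e : rel T) (s : seq T) : bool :=
  match s with
  | [::] => false
  | x :: s' => path e x s' && uniq s
  end.

Definition has_endvertex (T : finType) (v : T) (s : seq T) : bool :=
  (head v s == v) || (last v s == v).

(* tau v = order of a longest path having v as an endvertex.
   Paths have distinct vertices, so their order is at most #|T|. *)
Definition tau (T : finType) (e : rel T) (v : T) : nat :=
  \max_(k < #|T|.+1 |
        [exists s : k.-tuple T, is_gpath e s && has_endvertex v s]) k.

Definition detour_seq (T : finType) (e : rel T) : seq nat :=
  sort leq [seq tau e v | v <- enum T].

(* Complete multipartite graph K(n_0, ..., n_{p-1}): vertex (i, j) with j < n i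
   lies in part i; two vertices are adjacent iff they lie in different parts. *)
Definition KVert (p : nat) (n : nat -> nat) : finType := {i : 'I_p & 'I_(n i)}.

Definition Kadj (p : nat) (n : nat -> nat) : rel (KVert p n) :=
  fun u v => tag u != tag v.

From mathcomp Require Import all_boot zify.

(* Two vertices of the same part are never consecutive on a path, so a path
   contains at most one more vertex of a part A than of its complement, and no
   more than as many if one of its endvertices lies outside A.  This bounds tau v
   by N, and by 2 |V \ A| + [v in A].  Conversely, a vertex set S in which every
   part fills at most half of S (the part of v half plus one) has a Hamiltonian
   path starting at v: always step into the largest part other than the current
   one.  All vertices form such a set when no part exceeds N/2; otherwise the
   complement of the largest part together with |V \ A| (+ 1) of its vertices
   does, and both upper bounds are attained. *)

Set Implicit Arguments. Unset Strict Implicit. Unset Printing Implicit Defensive.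

Lemma sorted_nseq_cat m k x y : x <= y -> sorted leq (nseq m x ++ nseq k y).
Proof.
have sorted_nseq z j : sorted leq (nseq j z) by elim: j => [|[|j] IH] //=; rewrite leqnn.
move=> xy; case: m => [|m]; first exact: sorted_nseq.
elim: m => [|m IH] /=; last by rewrite leqnn.
by case: k => //= k; rewrite xy; exact: (sorted_nseq y k.+1).
Qed.

Lemma exists_subset_between (T : finType) (C A : {set T}) k :
  C \subset A -> #|C| <= k <= #|A| ->
  exists B : {set T}, [/\ C \subset B, B \subset A & #|B| = k].
Proof.
move=> CA /andP[]; elim: k => [|k IH] Ck kA.
  by exists C; split; [exact: subxx | exact: CA | lia].
have [CkS | Ck'] := eqVneq #|C| k.+1.
  by exists C; split; [exact: subxx | exact: CA |].
have [B [CB BA cardB]] := IH ltac:(lia) (ltnW kA).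
have : 0 < #|A :\: B| by rewrite cardsD (setIidPr BA); lia.
case/card_gt0P => x; rewrite inE => /andP[xB xA].
exists (x |: B); split; first exact: subset_trans CB (subsetU1 x B).
  by rewrite subUset sub1set xA.
by rewrite cardsU1 xB cardB.
Qed.

Section Detour.
Variables (T : finType) (e : rel T).

Lemma size_path_le_tau v s : path e v s -> uniq (v :: s) -> size (v :: s) <= tau e v.
Proof.
move=> vs_path vs_uniq.
have size_lt : size (v :: s) < #|T|.+1.
  by rewrite ltnS -(card_uniqP vs_uniq) max_card.
apply: (@leq_bigmax_cond _ _ (fun k : 'I_#|T|.+1 => nat_of_ord k) (Ordinal size_lt)).
apply/existsP; exists (in_tuple (v :: s)).
by rewrite /= vs_path -cons_uniq vs_uniq /has_endvertex eqxx.
Qed.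

Lemma tau_le v k :
  (forall s, is_gpath e s -> has_endvertex v s -> size s <= k) -> tau e v <= k.
Proof.
move=> bound; apply/bigmax_leqP => j /existsP[s /andP[s_path s_end]].
by rewrite -(size_tuple s); exact: bound.
Qed.

Lemma size_gpath_le_card s : is_gpath e s -> size s <= #|T|.
Proof. by case: s => // x s /andP[_ /card_uniqP <-]; exact: max_card. Qed.

Section IndependentSet.
Variable A : {set T}.
Hypothesis A_indep : {in A &, forall x y, ~~ e x y}.

Lemma count_path_independent x s : path e x s ->
  count (mem A) (x :: s) + (x \notin A) + (last x s \notin A)
    <= count (predC (mem A)) (x :: s) + 1.
Proof.
elim: s x => [|y s IH] x /=; first by case: (x \in A).
move=> /andP[exy ys_path]; have := IH y ys_path => /=.
case xA: (x \in A) => /=; last by lia.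
have -> : y \in A = false by apply/negbTE/(contraL (A_indep xA) exy).
by rewrite /=; lia.
Qed.

Lemma size_gpath_independent v s : is_gpath e s -> has_endvertex v s ->
  size s + (v \notin A) <= #|~: A|.*2 + 1.
Proof.
case: s => [//|x s] /andP[xs_path xs_uniq] v_end.
have count_le := count_path_independent xs_path.
have v_le : (v \notin A) <= (x \notin A) + (last x s \notin A).
  by case/orP: v_end => /eqP <-; case: (_ \in A); case: (_ \in A).
have countC_le : count (predC (mem A)) (x :: s) <= #|~: A|.
  rewrite -size_filter -(card_uniqP (filter_uniq _ xs_uniq)).
  by apply/subset_leq_card/subsetP => y; rewrite mem_filter !inE => /andP[].
have := count_predC (mem A) (x :: s); lia.
Qed.

End IndependentSet.

Lemma detour_seq_two_values (A : {set T}) a b : a <= b ->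
  (forall v, tau e v = if v \in A then b else a) ->
  detour_seq e = nseq #|~: A| a ++ nseq #|A| b.
Proof.
move=> ab tauE; rewrite /detour_seq (eq_map tauE).
set f := fun v => if v \in A then b else a.
have map_cst (B : {set T}) d : {in B, forall v, f v = d} ->
    map f (filter (mem B) (enum T)) = nseq #|B| d.
  move=> fB; have -> : #|B| = size (map f (filter (mem B) (enum T))).
    by rewrite size_map enumT cardE.
  apply/all_pred1P/allP => y /mapP[v].
  by rewrite mem_filter => /andP[vB _] ->; rewrite /= fB.
apply: (sorted_eq leq_trans anti_leq (sort_sorted leq_total _)).
  exact: sorted_nseq_cat ab.
have splitA :
    perm_eq (enum T) (filter (mem (~: A)) (enum T) ++ filter (mem A) (enum T)).
  rewrite perm_sym perm_catC (@eq_filter _ (mem (~: A)) (predC (mem A))) => [|v].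
    exact/permEl/perm_filterC.
  by rewrite /= inE.
rewrite perm_sort; apply: perm_trans (perm_map f splitA) _.
rewrite map_cat (map_cst _ a) ?(map_cst _ b) // => v; rewrite /f.
  by move->.
by rewrite inE => /negbTE ->.
Qed.

End Detour.

Section CompleteMultipartite.
Variables (T I : finType) (c : T -> I).

Definition multipartite_adj : rel T := fun x y => c x != c y.

Definition part (i : I) : {set T} := [set x | c x == i].

Definition balanced (S : {set T}) (v : T) :=
  forall i, #|S :&: part i|.*2 <= #|S| + (i == c v).

Lemma in_part x i : (x \in part i) = (c x == i).
Proof. by rewrite inE. Qed.

Lemma part_independent i : {in part i &, forall x y, ~~ multipartite_adj x y}.
Proof.
by move=> x y; rewrite !in_part /multipartite_adj => /eqP -> /eqP ->; rewrite eqxx.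
Qed.

Lemma leq_card_setI_parts (S : {set T}) i j : i != j ->
  #|S :&: part i| + #|S :&: part j| <= #|S|.
Proof.
move=> ij; rewrite -(cardsID (part i) S) leq_add2l.
apply/subset_leq_card/subsetP => x; rewrite !inE => /andP[xS /eqP cxj].
by rewrite cxj eq_sym ij.
Qed.

Lemma card_setI_part_setD1 (S : {set T}) v i : v \in S ->
  #|S :&: part i| = (c v == i) + #|(S :\ v) :&: part i|.
Proof.
move=> vS; rewrite (cardsD1 v) !inE vS /=; congr (_ + _).
by apply: eq_card => x; rewrite !inE andbA.
Qed.

Lemma balanced_other_part (S : {set T}) v :
    v \in S -> balanced S v -> 1 < #|S| -> exists2 x, x \in S :\ v & c x != c v.
Proof.
move=> vS bal S_gt1.
have [x /andP[xS xv] | none] := pickP [pred x in S :\ v | c x != c v].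
  by exists x.
have /setIidPl S_part : S \subset part (c v).
  apply/subsetP => x xS; rewrite inE; have [-> // | xv] := eqVneq x v.
  by have := none x; rewrite /= !inE xv xS => /negbFE.
by have := bal (c v); rewrite S_part eqxx; lia.
Qed.

Lemma balanced_setD1 (S : {set T}) v w : v \in S -> balanced S v -> c w != c v ->
  (forall i, i != c v ->
     #|(S :\ v) :&: part i| <= #|(S :\ v) :&: part (c w)|) ->
  balanced (S :\ v) w.
Proof.
move=> vS bal wv w_max i.
have := bal i; rewrite (cardsD1 v S) vS (card_setI_part_setD1 i vS).
have [-> | iw] := eqVneq i (c w).
  by rewrite eq_sym (negbTE wv); lia.
rewrite addn0; have [-> | iv] := eqVneq i (c v); first by lia.
by have := w_max i iv; have := leq_card_setI_parts (S :\ v) iw; lia.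
Qed.

Lemma balanced_next (S : {set T}) v : v \in S -> balanced S v -> 1 < #|S| ->
  exists w, [/\ w \in S :\ v, c w != c v & balanced (S :\ v) w].
Proof.
move=> vS bal S_gt1; have [x xS' xv] := balanced_other_part vS bal S_gt1.
(* Stepping into a largest part other than that of v keeps the rest balanced. *)
have [j jv j_max] := @arg_maxnP _ (c x) [pred i | i != c v]
  (fun i => #|(S :\ v) :&: part i|) xv.
have : 0 < #|(S :\ v) :&: part j|.
  apply: (leq_trans _ (j_max _ xv)); apply/card_gt0P; exists x.
  by rewrite in_setI xS' in_part eqxx.
case/card_gt0P => w; rewrite in_setI in_part => /andP[wS' /eqP cwj].
have wv : c w != c v by rewrite cwj.
exists w; split => //; apply: (balanced_setD1 vS bal wv) => i iv.
by rewrite cwj; exact: j_max.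
Qed.

Lemma balanced_hamiltonian_path (S : {set T}) v : v \in S -> balanced S v ->
  exists s, [/\ path multipartite_adj v s, uniq (v :: s),
                {subset v :: s <= S} & size (v :: s) = #|S|].
Proof.
have [k] := ubnP #|S|; elim: k S v => // k IH S v; rewrite ltnS => S_le vS bal.
have [S_le1 | S_gt1] := leqP #|S| 1.
  exists [::]; split => //; first by move=> x; rewrite inE => /eqP ->.
  by apply/anti_leq; rewrite S_le1 andbT; apply/card_gt0P; exists v.
have [w [wS' wv bal']] := balanced_next vS bal S_gt1.
have S'_lt : #|S :\ v| < k by move: S_le; rewrite (cardsD1 v S) vS.
have [s [ws_path ws_uniq ws_sub ws_size]] := IH _ _ S'_lt wS' bal'.
exists (w :: s); split.
- by rewrite /= ws_path andbT /multipartite_adj eq_sym.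
- by rewrite cons_uniq ws_uniq andbT; apply/negP => /ws_sub; rewrite !inE eqxx.
- by move=> x; rewrite inE => /predU1P[-> // | /ws_sub]; rewrite inE => /andP[].
- by rewrite (cardsD1 v S) vS -ws_size.
Qed.

Lemma balanced_le_tau (S : {set T}) v : v \in S -> balanced S v ->
  #|S| <= tau multipartite_adj v.
Proof.
move=> vS bal; have [s [vs_path vs_uniq _ <-]] := balanced_hamiltonian_path vS bal.
exact: size_path_le_tau.
Qed.

Lemma tau_small_parts v : (forall i, #|part i|.*2 <= #|T|) ->
  tau multipartite_adj v = #|T|.
Proof.
move=> small; apply/anti_leq/andP; split.
  by apply: tau_le => s s_gpath _; exact: (size_gpath_le_card s_gpath).
rewrite -cardsT; apply: balanced_le_tau (in_setT v) _ => i.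
by rewrite setTI cardsT (leq_trans (small i)) ?leq_addr.
Qed.

Lemma tau_dominant_part i v : #|~: part i| < #|part i| ->
  tau multipartite_adj v = 2 * #|~: part i| + (v \in part i).
Proof.
set M := #|~: part i| => dominant; apply/anti_leq/andP; split.
  apply: tau_le => s s_gpath v_end.
  have := size_gpath_independent (part_independent (i := i)) s_gpath v_end.
  by rewrite -/M; case: (v \in part i) => /=; lia.
set C := [set v] :&: part i.
have cardC : #|C| = (v \in part i).
  have [vi | vi] := boolP (v \in part i).
    by rewrite /C (setIidPl _) ?cards1 ?sub1set.
  by apply/eqP; rewrite cards_eq0 setI_eq0 disjoints1.
(* The witness: all of ~: part i, and M vertices of part i, plus v if v is one. *)
have [B [CB Bi cardB]] :=
  @exists_subset_between _ C (part i) (M + (v \in part i)) (subsetIr _ _)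
    ltac:(rewrite cardC; case: (v \in part i) => /=; lia).
set S := ~: part i :|: B.
have S_part : S :&: part i = B.
  by rewrite setIUl [~: _ :&: _]setIC setICr set0U (setIidPl Bi).
have S_notpart : S :\: part i = ~: part i.
  by apply/setP => x; rewrite !inE; case: (c x == i).
have cardS : #|S| = #|B| + M by rewrite -(cardsID (part i) S) S_part S_notpart.
have vS : v \in S.
  have [vi | vi] := boolP (v \in part i); last by rewrite in_setU in_setC vi.
  by rewrite in_setU (subsetP CB) ?orbT // in_setI set11 vi.
suff bal : balanced S v by have := balanced_le_tau vS bal; rewrite cardS cardB; lia.
move=> j; rewrite cardS cardB; have [-> | ji] := eqVneq j i.
  by rewrite S_part cardB eq_sym -in_part; lia.
have : #|S :&: part j| <= M.
  apply/subset_leq_card/subsetP => x; rewrite !inE => /andP[_ /eqP ->].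
  by rewrite ji.
lia.
Qed.

End CompleteMultipartite.

Lemma Kadj_multipartite p n :
  @Kadj p n = multipartite_adj (fun x : KVert p n => tag x).
Proof. by []. Qed.

Lemma card_KVert p n : #|KVert p n| = \sum_(i < p) n i.
Proof.
rewrite card_tagged sumnE big_map big_enum.
by apply: eq_bigr => i _; rewrite card_ord.
Qed.

Lemma card_part_tag p n (i : 'I_p) :
  #|part (fun x : KVert p n => tag x) i| = n i.
Proof.
have -> : part (fun x : KVert p n => tag x) i =
          [set Tagged (fun i : 'I_p => 'I_(n i)) j | j in 'I_(n i)].
  apply/setP => x; rewrite in_part; apply/eqP/imsetP => [xi | [j _ ->] //].
  by exists (etagged xi); rewrite ?etaggedK.
by rewrite card_imset ?card_ord //; exact: eq_from_Tagged.
Qed.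

Theorem theorem1p23 (p : nat) (n : nat -> nat) :
  2 <= p ->
  (forall i j, i <= j < p -> n i <= n j) ->
  let N := \sum_(i < p) n i in
  let np := n p.-1 in
  (np.*2 <= N -> detour_seq (@Kadj p n) = nseq N N) /\
  (N < np.*2 ->
     detour_seq (@Kadj p n) =
       nseq (N - np) (2 * (N - np)) ++ nseq np (2 * (N - np)).+1).
Proof.
move=> p_ge2 n_mono N np; rewrite Kadj_multipartite.
set c := fun x : KVert p n => tag x.
have cardT : #|KVert p n| = N by exact: card_KVert.
have last_lt : p.-1 < p by lia.
have n_le (i : 'I_p) : n i <= np by apply: n_mono; have := ltn_ord i; lia.
split=> [small | large].
  rewrite (@detour_seq_two_values _ _ setT N N) ?setCT ?cards0 ?cardsT ?cardT // => v.
  rewrite in_setT -cardT; apply: tau_small_parts => i.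
  by rewrite card_part_tag cardT (leq_trans _ small) // leq_double n_le.
pose L := Ordinal last_lt.
have cardL : #|part c L| = np := card_part_tag n L.
have cardCL : #|~: part c L| = N - np by rewrite cardsCs setCK cardL cardT.
rewrite -cardCL -cardL.
rewrite (@detour_seq_two_values _ _ (part c L) (2 * #|~: part c L|) _ (leqnSn _)) // => v.
rewrite (@tau_dominant_part _ _ c L v); first by case: (v \in _); rewrite ?addn0 ?addn1.
by rewrite cardCL cardL; lia.
Qed.
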